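(* Let $C_*\ge3$ and $H>0$, and let $R_e=R_e(C_*,H)$ be the $q$-effective radius. Let $x,y\in\mathbb{Z}^d$ and let $\gamma\in\mathbb{G}_H(x,y)$ be a geodesic of $\mathrm{T}_H(x,y)$. Suppose $e\in\gamma$ is an edge with $x,y\notin\Lambda_{3R_e}(e)$. Then there exists a path $\eta_e$ from $x$ to $y$ such that (a) $\eta_e\cap\Lambda_{R_e-1}(e)=\emptyset$ and every edge of $\eta_e\setminus\gamma$ is $q$-open; (b) $|\eta_e\setminus\gamma|\le C_*R_e$.
   Context: Edge weights $(\tau_e)$ on $\mathcal{E}(\mathbb{Z}^d)$ are i.i.d. with values in $[0,\infty]$; for a fixed $\lambda>0$, an edge is $q$-open if $\tau_e\le\lambda$. A path is a sequence of distinct vertices with consecutive vertices at $\ell^1$-distance 1; $\mathcal{P}(A)$ is the set of paths in $A$, $|\cdot|$ counts edges. $\mathrm{T}_H^A(u,v)$ is the passage time with weights $\tau_e\wedge H$ over paths in $A$; $\mathrm{T}_H=\mathrm{T}_H^{\mathbb{Z}^d}$; $\mathbb{G}_H(u,v;A)$ is the set of paths in $A$ from $u$ to $v$ attaining $\mathrm{T}_H^A(u,v)$, $\mathbb{G}_H(u,v)=\mathbb{G}_H(u,v;\mathbb{Z}^d)$, $\mathbb{G}_H(A)=\bigcup_{u,v\in A}\mathbb{G}_H(u,v;A)$. $\mathrm{D}_q^U(A,B)$ is the minimal number of edges of a $q$-open path inside $U$ from $A$ to $B$. $\Lambda_t(x)=x+[-t,t]^d\cap\mathbb{Z}^d$,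 $\partial\Lambda_t(x)=\Lambda_t(x)\setminus\Lambda_{t-1}(x)$; for $e=(x_e,y_e)$ with $\|x_e\|_1<\|y_e\|_1$, $\Lambda_N(e)=\Lambda_N(x_e)$, $\mathrm{A}_N(e)=\Lambda_{3N}(e)\setminus\Lambda_N(e)$, and $\mathscr{C}(\mathrm{A}_N(e))$ is the set of paths inside $\mathrm{A}_N(e)$ joining $\partial\Lambda_N(e)$ and $\partial\Lambda_{3N}(e)$. The effective radius is $R_e=\inf\{N\ge3:\forall\gamma_1,\gamma_2\in\mathbb{G}_H(\Lambda_{C_*N}(e))\cap\mathscr{C}(\mathrm{A}_N(e)),\ \mathrm{D}_q^{\mathrm{A}_N(e)}(\gamma_1,\gamma_2)\le C_*N\}$. (In the paper $C_*$ is the constant fixed by its tail estimate for $R_e$.) *)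

From HB Require Import structures.
From mathcomp Require Import all_boot all_order all_algebra.
From mathcomp Require Import reals constructive_ereal.
Set Implicit Arguments. Unset Strict Implicit. Unset Printing Implicit Defensive.
Import Order.TTheory GRing.Theory Num.Theory.
Local Open Scope ring_scope.

Definition vtx (d : nat) := {ffun 'I_d -> int}.

Definition norm1 {d} (u : vtx d) : nat := (\sum_(i < d) `|u i|%N)%N.
Definition dist1 {d} (u v : vtx d) : nat := (\sum_(i < d) `|u i - v i|%N)%N.
Definition adj {d} (u v : vtx d) : bool := dist1 u v == 1%N.

(* An edge {u,v} is represented canonically as (x_e, y_e) with ||x_e||_1 < ||y_e||_1. *)
Definition canon {d} (u v : vtx d) : vtx d * vtx d :=
  if (norm1 u < norm1 v)%N then (u, v) else (v, u).

Definition is_path_uv {d} (u v : vtx d) (s : seq (vtx d)) : bool :=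
  [&& uniq s, sorted adj s, ohead s == Some u & ohead (rev s) == Some v].

Definition pedges {d} (s : seq (vtx d)) : seq (vtx d * vtx d) :=
  [seq canon p.1 p.2 | p <- zip s (behead s)].
Definition plen {d} (s : seq (vtx d)) : nat := (size s).-1.

Definition box {R : realType} {d} (t : R) (x : vtx d) : pred (vtx d) :=
  fun z => [forall i, `|((z i - x i)%:~R : R)| <= t].
Definition bdry {R : realType} {d} (t : R) (x : vtx d) : pred (vtx d) :=
  fun z => box t x z && ~~ box (t - 1) x z.
(* A_N(e), taken closed at its inner boundary. *)
Definition annulus {R : realType} {d} (N : nat) (e : vtx d * vtx d) : pred (vtx d) :=
  fun z => box (3 * (N%:R : R)) e.1 z && ~~ box ((N%:R : R) - 1) e.1 z.

Definition wtH {R : realType} {d} (H : R) (tau : vtx d * vtx d -> \bar R)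
  (f : vtx d * vtx d) : R := fine (Order.min (tau f) H%:E).
Definition pweight {R : realType} {d} (H : R) (tau : vtx d * vtx d -> \bar R)
  (s : seq (vtx d)) : R := \sum_(f <- pedges s) wtH H tau f.

Definition geod {R : realType} {d} (H : R) (tau : vtx d * vtx d -> \bar R)
  (A : pred (vtx d)) (u v : vtx d) (s : seq (vtx d)) : Prop :=
  [/\ is_path_uv u v s, all A s &
      forall s', is_path_uv u v s' -> all A s' -> pweight H tau s <= pweight H tau s'].

Definition geodA {R : realType} {d} (H : R) (tau : vtx d * vtx d -> \bar R)
  (A : pred (vtx d)) (s : seq (vtx d)) : Prop :=
  exists u v, [/\ A u, A v & geod H tau A u v s].

Definition qopen {R : realType} {d} (lam : R) (tau : vtx d * vtx d -> \bar R)
  (f : vtx d * vtx d) : bool := (tau f <= lam%:E)%E.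

Definition crossing {R : realType} {d} (N : nat) (e : vtx d * vtx d)
  (s : seq (vtx d)) : Prop :=
  all (@annulus R d N e) s /\
  exists u v, [/\ is_path_uv u v s, bdry (N%:R : R) e.1 u & bdry (3 * (N%:R : R)) e.1 v].

Definition Dq_le {R : realType} {d} (lam : R) (tau : vtx d * vtx d -> \bar R)
  (U A B : pred (vtx d)) (c : R) : Prop :=
  exists u v s, [/\ is_path_uv u v s, all U s, A u & B v] /\
     all (qopen lam tau) (pedges s) /\ (plen s)%:R <= c.

Definition good_radius {R : realType} {d} (lam H Cs : R)
  (tau : vtx d * vtx d -> \bar R) (e : vtx d * vtx d) (N : nat) : Prop :=
  forall g1 g2 : seq (vtx d),
    geodA H tau (box (Cs * N%:R) e.1) g1 -> crossing (R:=R) N e g1 ->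
    geodA H tau (box (Cs * N%:R) e.1) g2 -> crossing (R:=R) N e g2 ->
    Dq_le lam tau (annulus (R:=R) N e) (fun z => z \in g1) (fun z => z \in g2) (Cs * N%:R).

Definition is_eff_radius {R : realType} {d} (lam H Cs : R)
  (tau : vtx d * vtx d -> \bar R) (e : vtx d * vtx d) (N : nat) : Prop :=
  [/\ (3 <= N)%N, good_radius lam H Cs tau e N &
      forall M, (3 <= M)%N -> good_radius lam H Cs tau e M -> (N <= M)%N].

From HB Require Import structures.
From mathcomp Require Import all_boot all_order all_algebra.
From mathcomp Require Import reals constructive_ereal.
From mathcomp Require Import zify lra.
Import Order.TTheory GRing.Theory Num.Theory.
Set Implicit Arguments. Unset Strict Implicit. Unset Printing Implicit Defensive.

(** The geodesic gamma uses e, so it visits the inner box Lambda_{R_e - 1}(e).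
    Before its first visit it must cross the annulus A_{R_e}(e) coming from
    outside Lambda_{3 R_e}(e), and after its last visit it crosses it again on
    its way to y. Both crossings are segments of a geodesic, hence geodesics in
    Lambda_{C_* R_e}(e), so the definition of R_e provides a q-open path inside
    the annulus, with at most C_* R_e edges, joining them. Splicing this path
    into gamma and erasing loops gives eta_e: its only new edges are q-open, and
    it avoids the inner box since the parts of gamma it keeps lie before the
    first, resp. after the last, visit to that box. *)

Definition is_walk {d} (u v : vtx d) (s : seq (vtx d)) : bool :=
  [&& sorted adj s, ohead s == Some u & ohead (rev s) == Some v].

Section SeqLemmas.
Variable T : eqType.
Implicit Types (P : pred T) (s : seq T).

Lemma has_split_first P s : has P s ->
  exists s1 a s2, [/\ s = s1 ++ a :: s2, P a & ~~ has P s1].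
Proof.
elim: s => [|b s IH] //=; case Pb: (P b) => /= sP; first by exists [::], b, s.
have [s1 [a [s2 [-> Pa s1P]]]] := IH sP.
by exists (b :: s1), a, s2; rewrite /= Pb.
Qed.

Lemma has_split_last P s : has P s ->
  exists s1 a s2, [/\ s = s1 ++ a :: s2, P a & ~~ has P s2].
Proof.
rewrite -has_rev => /has_split_first [s1 [a [s2 [E Pa s1P]]]].
exists (rev s2), a, (rev s1); split; rewrite ?has_rev //.
by rewrite -(revK s) E rev_cat rev_cons cat_rcons.
Qed.

Lemma ohead_cat_cons s a l l' : ohead (s ++ a :: l) = ohead (s ++ a :: l').
Proof. by case: s. Qed.

Lemma ohead_rev_cat_cons s a l : ohead (rev (s ++ a :: l)) = Some (last a l).
Proof. by rewrite rev_cat lastI rev_rcons. Qed.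

Lemma sorted_cat_last (e : rel T) p a t b q :
  sorted e (p ++ a :: t ++ b :: q) -> e (last a t) b.
Proof. by rewrite sorted_cat_cons cat_path => /and3P [_ _ /andP []]. Qed.

End SeqLemmas.

Section LatticePaths.
Variable d : nat.
Notation V := (vtx d).
Implicit Types (a b u v x y : V) (p q s t : seq V).

Lemma dist1C u v : dist1 u v = dist1 v u.
Proof. by rewrite /dist1; apply: eq_bigr => i _; rewrite -abszN opprB. Qed.

Lemma adj_sym u v : adj u v = adj v u.
Proof. by rewrite /adj dist1C. Qed.

Lemma odd_norm1D u v : odd (norm1 u + norm1 v) = odd (dist1 u v).
Proof.
have [k ->] : exists k, (norm1 u + norm1 v = dist1 u v + k.*2)%N.
  exists (\sum_(i < d) ((`|u i|%N + `|v i|%N - `|u i - v i|%N) %/ 2))%N.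
  rewrite /norm1 /dist1 -big_split /= -mul2n big_distrr -big_split /=.
  by apply: eq_bigr => i _; lia.
by rewrite oddD odd_double addbF.
Qed.

Lemma adj_norm1_neq u v : adj u v -> norm1 u != norm1 v.
Proof.
move=> /eqP uv; apply/eqP => Euv; have := odd_norm1D u v.
by rewrite uv Euv addnn odd_double.
Qed.

(* Adjacent vertices have 1-norms of different parity, so [canon] never ties. *)
Lemma canonC u v : adj u v -> canon u v = canon v u.
Proof.
move/adj_norm1_neq; rewrite /canon => uv.
by case: ltnP => ?; case: ltnP => ? //; lia.
Qed.

Lemma adj_coord u v i : adj u v -> (`|u i - v i| <= 1)%N.
Proof. by rewrite /adj /dist1 => /eqP <-; rewrite (bigD1 i) //= leq_addr. Qed.

Lemma pedges_cons a t : pedges (a :: t) = pairmap canon a t.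
Proof. by elim: t a => [|b t IH] a //=; rewrite -IH. Qed.

Lemma pedges_cons2 a b t : pedges [:: a, b & t] = canon a b :: pedges (b :: t).
Proof. by rewrite !pedges_cons. Qed.

Lemma size_pedges s : size (pedges s) = plen s.
Proof. by case: s => [|a t] //; rewrite pedges_cons size_pairmap. Qed.

Lemma pedges_cat_cons p a t :
  pedges (p ++ a :: t) = pedges (rcons p a) ++ pedges (a :: t).
Proof.
by case: p => [|b p] //; rewrite -cats1 !pedges_cons !pairmap_cat -catA.
Qed.

Lemma pedges_cons_cat a t q :
  pedges (a :: t ++ q) = pedges (a :: t) ++ pedges (last a t :: q).
Proof. by rewrite !pedges_cons pairmap_cat. Qed.

Lemma mem_pedges_fst f s : f \in pedges s -> f.1 \in s.
Proof.
case: s => [|a t] //; rewrite pedges_cons.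
elim: t a => [|b t IH] a //=; rewrite inE => /orP [/eqP ->|/IH fbt].
  by rewrite /canon; case: ifP; rewrite !inE eqxx ?orbT.
by rewrite inE fbt orbT.
Qed.

Lemma pedges_rev s : sorted adj s -> pedges (rev s) = rev (pedges s).
Proof.
case: s => [|a t] //; elim: t a => [|b t IH] a //= /andP [ab bt].
rewrite rev_cons rev_cons -!cats1 -catA /= pedges_cat_cons cats1 -rev_cons IH //.
by rewrite pedges_cons2 (canonC ab) rev_cons.
Qed.

Lemma is_walkP x y s :
  reflect (exists t, [/\ s = x :: t, path adj x t & last x t = y]) (is_walk x y s).
Proof.
apply: (iffP and3P) => [[st /eqP xs /eqP ys]|[t [-> xt <-]]].
  case: s st xs ys => [|a t] // xt [<-].
  by rewrite (ohead_rev_cat_cons [::]) => -[<-]; exists t.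
by rewrite (ohead_rev_cat_cons [::]).
Qed.

Lemma is_walk_rev x y s : is_walk x y s -> is_walk y x (rev s).
Proof.
case/and3P => st xs ys; rewrite /is_walk revK xs ys rev_sorted !andbT.
by apply: sub_sorted st => a b; rewrite /= adj_sym.
Qed.

Lemma is_path_uv_rev x y s : is_path_uv x y s -> is_path_uv y x (rev s).
Proof. by case/andP => us /is_walk_rev; rewrite /is_path_uv rev_uniq us. Qed.

Lemma is_path_uv_suffix x y p a t :
  is_path_uv x y (p ++ a :: t) -> is_path_uv a y (a :: t).
Proof.
case/and4P => us st _ /eqP ys; apply/and4P; split => //.
- by move: us; rewrite cat_uniq => /and3P [].
- by move: st; rewrite sorted_cat_cons => /andP [].
- by rewrite -ys (ohead_rev_cat_cons [::]) ohead_rev_cat_cons.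
Qed.

Lemma is_path_uv_prefix x y a t q :
  is_path_uv x y (a :: t ++ q) -> is_path_uv a (last a t) (a :: t).
Proof.
case/and4P => + + _ _; rewrite -cat_cons cat_uniq => /andP [seg_uniq _].
rewrite /= cat_path => /andP [seg_path _].
by rewrite /is_path_uv seg_uniq /= seg_path (ohead_rev_cat_cons [::]) !eqxx.
Qed.

Lemma walk_loop_erasure x y w : is_walk x y w ->
  exists eta, [/\ is_path_uv x y eta, {subset eta <= w} &
                  subseq (pedges eta) (pedges w)].
Proof.
case/is_walkP => t [-> xt <-] {w}.
elim: t x xt => [|b t IH] x.
  by exists [:: x]; split; rewrite // /is_path_uv /= eqxx.
case/andP => xb /IH [eta [eta_path eta_sub eta_edges]]; rewrite [last x _]/=.
have [x_eta|x_eta] := boolP (x \in eta).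
  move: eta_path eta_sub eta_edges.
  case/splitPr: x_eta => p q eta_path eta_sub eta_edges.
  exists (x :: q); split; first exact: is_path_uv_suffix eta_path.
    by move=> z z_q; rewrite inE eta_sub ?orbT // mem_cat z_q orbT.
  rewrite pedges_cat_cons in eta_edges; rewrite pedges_cons2.
  exact/(subseq_trans (suffix_subseq _ _))/(subseq_trans eta_edges)/subseq_cons.
case/andP: eta_path => eta_uniq /is_walkP [r [Eeta br <-]].
exists (x :: eta); split.
- rewrite /is_path_uv /= x_eta eta_uniq Eeta /= xb br.
  by rewrite (ohead_rev_cat_cons [::]) !eqxx.
- move=> z; rewrite inE => /orP [/eqP ->|/eta_sub zbt];
  by rewrite inE ?eqxx ?zbt ?orbT.
- by rewrite Eeta !pedges_cons2 /= eqxx -Eeta.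
Qed.

Lemma walk_splice x y u v p q p' q' s :
  is_walk x y (p ++ u :: q) -> is_walk x y (p' ++ v :: q') -> is_walk u v s ->
  is_walk x y (p ++ s ++ q').
Proof.
case/and3P => st1 xs _ /and3P [st2 _ ys] /is_walkP [t [-> ut vt]].
rewrite ohead_rev_cat_cons -vt in ys.
apply/and3P; split; last by rewrite ohead_rev_cat_cons last_cat.
- move: st1 st2; rewrite /= !sorted_cat_cons cat_path ut -vt.
  by case/andP => -> _ /andP [_ ->].
- by rewrite (ohead_cat_cons _ _ _ q).
Qed.

Lemma pedges_splice u v p s q : is_walk u v s ->
  pedges (p ++ s ++ q) = pedges (rcons p u) ++ pedges s ++ pedges (v :: q).
Proof. by case/is_walkP => t [-> _ <-]; rewrite /= pedges_cat_cons pedges_cons_cat. Qed.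

Lemma detour (K : pred V) x y u v g p q p' q' s :
  is_path_uv x y g -> g = p ++ u :: q -> g = p' ++ v :: q' -> is_walk u v s ->
  ~~ has K p -> ~~ has K s -> ~~ has K q' ->
  exists eta, [/\ is_path_uv x y eta, ~~ has K eta,
    forall f, f \in pedges eta -> f \notin pedges g -> f \in pedges s &
    (count (fun f => f \notin pedges g) (pedges eta) <= size (pedges s))%N].
Proof.
move=> /andP [_ g_walk] Eu Ev s_walk Kp Ks Kq'.
have w_walk : is_walk x y (p ++ s ++ q').
  by apply: (@walk_splice x y u v p q p' q' s); rewrite -?Eu -?Ev.
have [eta [eta_path eta_sub eta_edges]] := walk_loop_erasure w_walk.
have old_edges : {subset pedges (rcons p u) ++ pedges (v :: q') <= pedges g}.
  move=> f; rewrite mem_cat => /orP [] f_in; [rewrite Eu | rewrite Ev];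
  by rewrite pedges_cat_cons mem_cat f_in ?orbT.
have w_edges f : f \in pedges eta ->
    f \in pedges (rcons p u) ++ pedges s ++ pedges (v :: q').
  by move/(mem_subseq eta_edges); rewrite (pedges_splice _ _ s_walk).
have new_edges f : f \in pedges eta -> f \notin pedges g -> f \in pedges s.
  move/w_edges; rewrite !mem_cat => /or3P [f_old|//|f_old];
  by rewrite old_edges // mem_cat f_old ?orbT.
exists eta; split => //.
  apply/hasPn => z /eta_sub; rewrite !mem_cat => /or3P [] z_in;
  by [apply: (hasPn Kp) | apply: (hasPn Ks) | apply: (hasPn Kq')].
apply: leq_trans (leq_count_subseq _ eta_edges) _.
rewrite (pedges_splice _ _ s_walk) !count_cat.
have no_old l :
    {subset l <= pedges g} -> count (fun f => f \notin pedges g) l = 0%N.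
  move=> lg; apply/eqP; rewrite -leqn0 leqNgt -has_count.
  by apply/hasPn => f /lg ->.
rewrite (no_old (pedges (rcons p u))) ?(no_old (pedges (v :: q'))).
- by rewrite add0n addn0 count_size.
all: by move=> f f_in; apply: old_edges; rewrite mem_cat f_in ?orbT.
Qed.

End LatticePaths.

Local Open Scope ring_scope.

Section Weights.
Variables (R : realType) (d : nat) (H : R) (tau : vtx d * vtx d -> \bar R).
Hypotheses (H_gt0 : 0 < H) (tau_ge0 : forall f, (0 <= tau f)%E).
Notation V := (vtx d).
Implicit Types (u v x y : V) (g p q s : seq V).

Lemma wtH_ge0 f : 0 <= wtH H tau f.
Proof. by apply: fine_ge0; rewrite le_min tau_ge0 lee_fin ltW. Qed.

Lemma pweight_subseq s1 s2 :
  subseq (pedges s1) (pedges s2) -> pweight H tau s1 <= pweight H tau s2.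
Proof.
rewrite /pweight; elim: (pedges s2) (pedges s1) => [|b l IH] [|a l'] //=.
  by move=> _; rewrite big_nil; apply: sumr_ge0 => f _; apply: wtH_ge0.
case: eqP => [->|_] sub; rewrite [X in _ <= X]big_cons.
  by rewrite big_cons lerD2l IH.
by rewrite (le_trans (IH _ sub)) // ler_wpDl ?wtH_ge0.
Qed.

Lemma pweight_rev s : sorted adj s -> pweight H tau (rev s) = pweight H tau s.
Proof. by move=> s_sorted; rewrite /pweight pedges_rev // big_rev. Qed.

Lemma pweight_splice u v p s q : is_walk u v s ->
  pweight H tau (p ++ s ++ q) =
  pweight H tau (rcons p u) + pweight H tau s + pweight H tau (v :: q).
Proof.
by move=> s_walk; rewrite /pweight (pedges_splice _ _ s_walk) !big_cat /= addrA.
Qed.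

Lemma geod_rev x y g : geod H tau predT x y g -> geod H tau predT y x (rev g).
Proof.
case=> g_path _ g_min; split; [exact: is_path_uv_rev | exact: all_predT |].
move=> s s_path _; have /and4P [_ g_sorted _ _] := g_path.
have /and4P [_ s_sorted _ _] := is_path_uv_rev s_path.
rewrite pweight_rev // -(revK s) pweight_rev //.
exact: g_min (is_path_uv_rev s_path) (all_predT _).
Qed.

Lemma geod_segment (A : pred V) x y u v g p s q :
  geod H tau predT x y g -> g = p ++ s ++ q -> is_path_uv u v s -> all A s ->
  geod H tau A u v s.
Proof.
case=> /andP [_ g_walk] _ g_min Eg s_path sA; split => // s' /andP [_ s'_walk] _.
have /andP [_ s_walk] := s_path.
have /is_walkP [t [Es _ vt]] := s_walk.
have w_walk : is_walk x y (p ++ s' ++ q).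
  apply: (@walk_splice _ x y u v p (t ++ q) (p ++ belast u t) q s') => //.
    by rewrite -cat_cons -Es -Eg.
  by rewrite -catA -vt -cat_rcons -lastI -Es -Eg.
have [eta [eta_path _ eta_edges]] := walk_loop_erasure w_walk.
(* eta is an x-y path no heavier than the splice, so g is no heavier either. *)
have := le_trans (g_min _ eta_path (all_predT _)) (pweight_subseq eta_edges).
by rewrite Eg (pweight_splice _ _ s_walk) (pweight_splice _ _ s'_walk) lerD2r lerD2l.
Qed.

End Weights.

Section Boxes.
Variables (R : realType) (d : nat).
Implicit Types (t : R) (c z : vtx d).

Lemma box_le t t' c z : t <= t' -> box t c z -> box t' c z.
Proof. by move=> tt' /forallP zc; apply/forallP => i; apply: le_trans (zc i) tt'. Qed.

Lemma box_center t c : 0 <= t -> box t c c.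
Proof. by move=> t_ge0; apply/forallP => i; rewrite subrr normr0. Qed.

Lemma adj_box t c z z' : box (t - 1) c z -> adj z z' -> box t c z'.
Proof.
move=> /forallP zc zz'; apply/forallP => i.
have -> : z' i - c i = (z' i - z i) + (z i - c i) by rewrite addrA subrK.
rewrite intrD; apply: le_trans (ler_normD _ _) _.
rewrite -[t](subrK 1) addrC lerD // -intr_norm -abszE.
by rewrite -[1](mulr1n) ler_nat; apply: adj_coord; rewrite adj_sym.
Qed.

End Boxes.

Section Crossing.
Variables (R : realType) (d : nat) (N : nat) (e : vtx d * vtx d).
Notation V := (vtx d).
Notation inner := (box ((N%:R : R) - 1) e.1).
Notation far := (predC (box (3 * (N%:R : R)) e.1)).

Lemma box_N_3N z : box (N%:R : R) e.1 z -> box (3 * N%:R : R) e.1 z.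
Proof. by apply: box_le; rewrite ler_peMl // ler1n. Qed.

Lemma annulus_notin_inner s : all (annulus (R := R) N e) s -> ~~ has inner s.
Proof. by move=> /allP s_ann; apply/hasPn => z /s_ann /andP []. Qed.

Lemma segment_crossing o a t b :
  adj o a -> adj (last a t) b -> ~~ box (3 * (N%:R : R)) e.1 o -> inner b ->
  is_path_uv a (last a t) (a :: t) -> all (annulus (R := R) N e) (a :: t) ->
  crossing (R := R) N e (rev (a :: t)).
Proof.
move=> oa tb o_far b_in seg_path /allP seg_ann.
split; first by rewrite all_rev; apply/allP.
exists (last a t), a; split; first exact: is_path_uv_rev.
  rewrite /bdry (adj_box b_in) 1?adj_sym //=.
  by case/andP: (seg_ann _ (mem_last a t)).
rewrite /bdry; case/andP: (seg_ann _ (mem_head a t)) => -> _ /=.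
by apply: contraNN o_far => a_in; apply: adj_box a_in _; rewrite adj_sym.
Qed.

Lemma crossing_before_inner x y g :
  is_path_uv x y g -> ~~ box (3 * (N%:R : R)) e.1 x -> has inner g ->
  exists p s q, [/\ g = p ++ s ++ q, ~~ has inner p & crossing (R := R) N e (rev s)].
Proof.
move=> g_path x_far /has_split_first [A [b [B [Eg b_in A_in]]]].
have /and4P [g_uniq g_sorted /eqP g_x _] := g_path.
have inner_near z : inner z -> box (3 * N%:R : R) e.1 z.
  by apply: box_le; have := ler0n R N; lra.
have A_far : has far A.
  case: A Eg A_in => [|a A] Eg _; move: g_x; rewrite Eg => -[ax].
    by move: x_far; rewrite -ax inner_near.
  by rewrite /= ax x_far.
have [X [o [C [EA o_far C_near]]]] := has_split_last A_far.
have Eg' : g = X ++ o :: C ++ b :: B by rewrite Eg EA -catA.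
case: C EA C_near Eg' => [|a t] EA C_near Eg'.
  have ob : adj o b by apply: (@sorted_cat_last _ _ X o [::] b B); rewrite -Eg'.
  by move: o_far; rewrite /= box_N_3N // (adj_box b_in) 1?adj_sym.
exists (rcons X o), (a :: t), (b :: B); split; first by rewrite cat_rcons.
  by move: A_in; rewrite EA -cat_rcons has_cat negb_or => /andP [].
move: g_path g_sorted; rewrite Eg' -cat_rcons => g_path g_sorted.
apply: (@segment_crossing o a t b) => //.
- by move: g_sorted; rewrite cat_rcons => /(@sorted_cat_last _ _ X o [::]).
- exact: sorted_cat_last g_sorted.
- exact: is_path_uv_prefix (is_path_uv_suffix g_path).
apply/allP => z z_in; apply/andP; split.
  by apply/negbNE; apply: (hasPn C_near).
by apply: (hasPn A_in); rewrite EA mem_cat inE z_in !orbT.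
Qed.

Lemma geod_crossing (H Cs : R) tau x y g :
  0 < H -> (forall f, (0 <= tau f)%E) -> 3 <= Cs ->
  geod H tau predT x y g -> ~~ box (3 * (N%:R : R)) e.1 x -> has inner g ->
  exists s, [/\ geodA H tau (box (Cs * N%:R) e.1) s, crossing (R := R) N e s &
    forall u, u \in s -> exists p q, g = p ++ u :: q /\ ~~ has inner p].
Proof.
move=> H_gt0 tau_ge0 Cs_ge3 g_geod x_far g_inner; have [g_path _ _] := g_geod.
have [p [s [q [Eg p_in s_cross]]]] := crossing_before_inner g_path x_far g_inner.
have [s_ann [a [b [s_path _ _]]]] := s_cross.
have s_box : all (box (Cs * N%:R) e.1) (rev s).
  apply: sub_all s_ann => z /andP [z_box _]; apply: box_le z_box.
  by rewrite ler_wpM2r // ler0n.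
exists (rev s); split => //.
  have /andP [_ /is_walkP [t [Es _ Eb]]] := s_path.
  exists a, b; split; [apply: (allP s_box) | apply: (allP s_box) |].
  - by rewrite Es mem_head.
  - by rewrite Es -Eb mem_last.
  have Erev : rev g = rev q ++ rev s ++ rev p by rewrite Eg !rev_cat catA.
  exact (geod_segment H_gt0 tau_ge0 (geod_rev g_geod) Erev s_path s_box).
move=> u; rewrite mem_rev => u_s.
have [s1 [s2 Es]] : exists s1 s2, s = s1 ++ u :: s2.
  by case/splitPr: u_s => s1 s2; exists s1, s2.
exists (p ++ s1), (s2 ++ q); split; first by rewrite Eg Es -!catA.
rewrite has_cat negb_or p_in /=.
by move: s_ann; rewrite all_rev Es all_cat => /andP [/annulus_notin_inner].
Qed.

End Crossing.

Theorem proposition2p5 (R : realType) (d : nat) (tau : vtx d * vtx d -> \bar R)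
  (lam H Cs : R) (Re : nat) (x y : vtx d) (gamma : seq (vtx d)) (e : vtx d * vtx d) :
  0 < lam -> 0 < H -> 3 <= Cs ->
  (forall f, (0 <= tau f)%E) ->
  is_eff_radius lam H Cs tau e Re ->
  geod H tau predT x y gamma ->
  e \in pedges gamma ->
  ~~ box (3 * (Re%:R : R)) e.1 x -> ~~ box (3 * (Re%:R : R)) e.1 y ->
  exists eta : seq (vtx d),
    [/\ is_path_uv x y eta,
        (forall z, z \in eta -> ~~ box ((Re%:R : R) - 1) e.1 z),
        (forall f, f \in pedges eta -> f \notin pedges gamma -> qopen lam tau f) &
        (count (fun f => f \notin pedges gamma) (pedges eta))%:R <= Cs * Re%:R].
Proof.
move=> _ H_gt0 Cs_ge3 tau_ge0 [Re_ge3 Re_good _] g_geod e_g x_far y_far.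
have g_inner : has (box ((Re%:R : R) - 1) e.1) gamma.
  apply/hasP; exists e.1; first exact: mem_pedges_fst e_g.
  by apply: box_center; rewrite subr_ge0 ler1n (leq_trans _ Re_ge3).
have [s1 [s1_geod s1_cross s1_split]] :=
  geod_crossing H_gt0 tau_ge0 Cs_ge3 g_geod x_far g_inner.
have rg_inner : has (box ((Re%:R : R) - 1) e.1) (rev gamma) by rewrite has_rev.
have [s2 [s2_geod s2_cross s2_split]] :=
  geod_crossing H_gt0 tau_ge0 Cs_ge3 (geod_rev g_geod) y_far rg_inner.
have [u [v [s [[s_path s_ann u_s1 v_s2] [s_open s_len]]]]] :=
  Re_good _ _ s1_geod s1_cross s2_geod s2_cross.
have [p [q [Eu p_in]]] := s1_split u u_s1.
have [q' [p' [Ev q'_in]]] := s2_split v v_s2.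
have Ev' : gamma = rev p' ++ v :: rev q'.
  by rewrite -(revK gamma) Ev rev_cat rev_cons cat_rcons.
have rq'_in : ~~ has (box ((Re%:R : R) - 1) e.1) (rev q') by rewrite has_rev.
have [g_path _ _] := g_geod.
have [eta [eta_path eta_in eta_new eta_count]] :=
  detour g_path Eu Ev' (proj2 (andP s_path)) p_in (annulus_notin_inner s_ann)
    rq'_in.
exists eta; split => //.
- by move=> z; apply/hasPn.
- by move=> f f_eta f_new; apply: (allP s_open); apply: eta_new.
- by apply: le_trans s_len; rewrite ler_nat -size_pedges.
Qed.
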